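(* Let $(R,d)$ be a fusion algebra with a finite generating set $X\subseteq I$. Then $\mathrm{F\o l}^{\mathrm{inn}}_X(R,d)\le1-\frac{1}{\omega_X(R,d)}$, and consequently $\mathrm{F\o l}^{\mathrm{inn}}(R,d)\le1-\frac{1}{\omega(R,d)}$.
   Context: A fusion algebra $(R,d)$ consists of a set $I$ with a distinguished $e$ and involution $\alpha\mapsto\bar\alpha$, a unital ring structure on $R=\mathbb{Z}[I]$ with unit $e$ and $\xi\eta=\sum_\alpha N^\alpha_{\xi,\eta}\alpha$, $N^\alpha_{\xi,\eta}\in\mathbb{Z}_{\ge0}$ finitely many nonzero, the involution extending to a $\mathbb{Z}$-linear antimultiplicative involution, Frobenius reciprocity $N^\alpha_{\xi,\eta}=N^\xi_{\alpha,\bar\eta}=N^\eta_{\bar\xi,\alpha}$, and a $\mathbb{Z}$-linear multiplicative $d:R\to\mathbb{R}$ with $d(\bar\alpha)=d(\alpha)\ge1$ on $I$. $\mathrm{supp}(r)$ is the set of $\alpha\in I$ with nonzero coefficient in $r$; $\alpha\subseteq r$ means $\alpha\in\mathrm{supp}(r)$. $|A|=\sum_{\alpha\in A}d(\alpha)^2$. A finite generating set is a finite $X\subseteq I$ with $\bar X=X$ such that every $\alpha\in I$ satisfies $\alpha\subseteq x_1\cdots x_n$ for some $x_i\in X$. $\ell_X(e)=0$, otherwise $\ell_X(\alpha)$ is the least such $n\ge1$; $B_X(n)=\{\alpha:\ell_X(\alpha)\le n\}$; $\omega_X(R,d)=\lim_n|B_X(n)|^{1/n}$ (exists), $\omega(R,d)=\inf_X\omega_X(R,d)$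 over finite generating sets. The inner boundary is $\partial^{\mathrm{inn}}_X(A)=\{\alpha\in A:\exists x\in X,\ \mathrm{supp}(\alpha x)\not\subseteq A\}$; $\mathrm{F\o l}^{\mathrm{inn}}_X(R,d)=\inf_A|\partial^{\mathrm{inn}}_X(A)|/|A|$ over nonempty finite $A\subseteq I$, and $\mathrm{F\o l}^{\mathrm{inn}}(R,d)=\inf_X\mathrm{F\o l}^{\mathrm{inn}}_X(R,d)$ over finite generating sets. *)

From HB Require Import structures.
From mathcomp Require Import all_boot all_order all_algebra.
From mathcomp Require Import finmap.
From mathcomp Require Import all_classical all_reals all_analysis.
Set Implicit Arguments. Unset Strict Implicit. Unset Printing Implicit Defensive.
Import Order.TTheory GRing.Theory Num.Theory.
Local Open Scope classical_set_scope.
Local Open Scope fset_scope.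
Local Open Scope ring_scope.

(* A fusion algebra (R = Z[I], d) over the index set I, with d real-valued
   (values in an arbitrary realType Rl, e.g. the real numbers).
   fN a x y = N^a_{x,y} is the coefficient of a in the product x*y of basis
   elements;  fsupp x y is the (finite) support of x*y. *)
Record fusion_algebra (Rl : realType) (I : choiceType) := FusionAlgebra {
  fe : I;
  fbar : I -> I;
  fN : I -> I -> I -> nat;
  fsupp : I -> I -> seq I;
  fd : I -> Rl;
  fbarK : forall a, fbar (fbar a) = a;
  fsupp_uniq : forall x y, uniq (fsupp x y);
  fsuppE : forall x y a, (a \in fsupp x y) = (fN a x y != 0)%N;
  fN_e_l : forall a x, fN a fe x = (a == x) :> nat;
  fN_e_r : forall a x, fN a x fe = (a == x) :> nat;
  (* associativity (x y) z = x (y z), coefficientwise *)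
  fN_assoc : forall x y z a,
    (\sum_(b <- fsupp x y) fN b x y * fN a b z =
     \sum_(b <- fsupp y z) fN b y z * fN a x b)%N;
  (* the involution is antimultiplicative: bar(x y) = bar y bar x *)
  fN_bar : forall a x y, fN (fbar a) (fbar y) (fbar x) = fN a x y;
  fN_frob1 : forall a x y, fN a x y = fN x a (fbar y);
  fN_frob2 : forall a x y, fN a x y = fN y (fbar x) a;
  (* d is multiplicative (its Z-linear extension is then automatic) *)
  fd_mul : forall x y, fd x * fd y = \sum_(a <- fsupp x y) (fN a x y)%:R * fd a;
  fd_bar : forall a, fd (fbar a) = fd a;
  fd_ge1 : forall a, 1 <= fd a
}.

Section FusionDefs.
Variables (Rl : realType) (I : choiceType) (F : fusion_algebra Rl I).
Local Notation e := (fe F).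
Local Notation N := (fN F).

(* An element of N[I] given by a (uniq) support list and a coefficient
   function; right multiplication by a basis element x:
   (sum_b c_b b) x = sum_b c_b sum_a N^a_{b,x} a. *)
Definition mul_basis (p : seq I * (I -> nat)) (x : I) : seq I * (I -> nat) :=
  (undup (flatten [seq fsupp F b x | b <- p.1]),
   fun a => (\sum_(b <- p.1) p.2 b * N a b x)%N).

Definition word_prod (w : seq I) : seq I * (I -> nat) :=
  foldl mul_basis ([:: e], fun a => nat_of_bool (a == e)) w.

Definition in_prod (a : I) (w : seq I) : bool := ((word_prod w).2 a != 0)%N.

Definition generating (X : {fset I}) : Prop :=
  [fset fbar F x | x in X] = X /\
  forall a : I, exists w : seq I,
    (1 <= size w)%N /\ all (fun x => x \in X) w /\ in_prod a w.

Definition length_pred (X : {fset I}) (a : I) (n : nat) : bool :=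
  `[< (1 <= n)%N /\ exists w : seq I,
        size w = n /\ all (fun x => x \in X) w /\ in_prod a w >].

(* word length ell_X(a) : 0 for e, otherwise the least admissible n
   (junk value 0 if there is none, which cannot happen for generating X) *)
Definition ell (X : {fset I}) (a : I) : nat :=
  if a == e then 0%N else
  match pselect (exists n, length_pred X a n) with
  | left h => ex_minn h
  | right _ => 0%N
  end.

Definition ball (X : {fset I}) (n : nat) : set I := [set a | (ell X a <= n)%N].

Definition mass (A : set I) : Rl := \sum_(a \in A) (fd F a) ^+ 2.

Definition omegaX (X : {fset I}) : Rl :=
  limn (fun n : nat => powR (mass (ball X n)) (n%:R)^-1).

Definition omega : Rl := inf [set w | exists X, generating X /\ w = omegaX X].

Definition inner_boundary (X : {fset I}) (A : {fset I}) : set I :=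
  [set a | a \in A /\ exists x, x \in X /\ ~ {subset fsupp F a x <= A}].

Definition FolX (X : {fset I}) : Rl :=
  inf [set r | exists A : {fset I}, A != fset0 /\
          r = mass (inner_boundary X A) / mass [set a | a \in A]].

Definition Fol : Rl := inf [set r | exists X, generating X /\ r = FolX X].

End FusionDefs.

(** Inner boundaries of balls are contained in spheres: an element of the
    ball [B(n+1)] that leaves it under right multiplication by a generator
    cannot lie in [B(n)].  Hence [Fol_X <= 1 - |B(n)| / |B(n+1)|] for every
    [n], i.e. [|B(n)| <= q |B(n+1)|] with [q = 1 - Fol_X].  Iterating,
    [|B(n)| >= q^-n], so the growth rate [omega_X] is at least [1/q]. *)
From Pilot Require Import Defs.
From HB Require Import structures.
From mathcomp Require Import all_boot all_order all_algebra.
From mathcomp Require Import finmap.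
From mathcomp Require Import all_classical all_reals all_analysis.
From mathcomp Require Import lra.
Import Order.TTheory GRing.Theory Num.Theory.
Local Open Scope ring_scope.
Local Open Scope classical_set_scope.

Lemma fset1_neq0 {K : choiceType} (x : K) : [fset x]%fset != fset0.
Proof. by apply/fset0Pn; exists x; rewrite inE. Qed.

Lemma le_subr_inv (R : numFieldType) (f w : R) :
  0 < w -> f < 1 -> (f <= 1 - w^-1) = ((1 - f)^-1 <= w).
Proof.
move=> w_gt0 f_lt1.
by rewrite lerBrDl -lerBrDr -lef_pV2 ?posrE ?invr_gt0 ?subr_gt0 // invrK.
Qed.

Section GrowthRate.
Variables (R : realType) (m : nat -> R) (q : R).
Hypotheses (m_ge1 : forall n, 1 <= m n) (m_le : forall n, m n <= q * m n.+1).

Let root_m n := m n `^ n%:R^-1.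

Lemma growth_factor_gt0 : 0 < q.
Proof. by have := m_le 0; have := m_ge1 0; have := m_ge1 1; nra. Qed.

Lemma exp_inv_growth_factor_le n : q^-1 ^+ n <= m n.
Proof.
have q_gt0 := growth_factor_gt0.
elim: n => [|n IHn]; first by rewrite expr0.
rewrite exprS -ler_pdivlMl ?invr_gt0 // invrK.
exact: le_trans IHn (m_le n).
Qed.

Lemma inv_growth_factor_le_root n : (0 < n)%N -> q^-1 <= root_m n.
Proof.
move=> n_gt0; have q_gt0 := growth_factor_gt0.
have qV_ge0 : 0 <= q^-1 by rewrite invr_ge0 ltW.
have -> : q^-1 = (q^-1 ^+ n) `^ n%:R^-1.
  rewrite -powR_mulrn // -powRrM mulfV ?powRr1 //.
  by rewrite pnatr_eq0 -lt0n.
apply: ge0_ler_powR; rewrite ?invr_ge0 ?nnegrE ?exprn_ge0 //.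
- exact: le_trans (m_ge1 n).
- exact: exp_inv_growth_factor_le.
Qed.

Lemma inv_lim_root_le : cvgn root_m -> (limn root_m)^-1 <= q.
Proof.
move=> root_cvg; have q_gt0 := growth_factor_gt0.
have qV_le : q^-1 <= limn root_m.
  apply: limr_ge => //; exists 1%N => // n /=.
  exact: inv_growth_factor_le_root.
have lim_gt0 : 0 < limn root_m by apply: lt_le_trans qV_le; rewrite invr_gt0.
by rewrite -lef_pV2 ?posrE ?invr_gt0 // invrK.
Qed.

End GrowthRate.

Section FusionAlgebra.
Set Implicit Arguments.
Unset Strict Implicit.
Variables (Rl : realType) (I : choiceType) (F : fusion_algebra Rl I).
Local Notation e := (fe F).

Lemma in_prod_supp w a : in_prod F a w -> a \in (word_prod F w).1.
Proof.
case/lastP: w => [|w x].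
  by rewrite /in_prod /word_prod /= inE; case: (a == e).
rewrite /in_prod /word_prod foldl_rcons /= sum_nat_seq_eq0 => /allPn [b b_in].
rewrite /= muln_eq0 negb_or => /andP[_ N_neq0].
by rewrite mem_undup; apply/flatten_mapP; exists b => //; rewrite fsuppE.
Qed.

Lemma in_prod_rcons w a b x :
  in_prod F a w -> b \in fsupp F a x -> in_prod F b (rcons w x).
Proof.
move=> a_in b_in; have a_supp := in_prod_supp a_in; move: a_in b_in.
rewrite /in_prod /word_prod foldl_rcons /= fsuppE sum_nat_seq_eq0 => a_in b_in.
by apply/allPn; exists a => //=; rewrite muln_eq0 negb_or a_in.
Qed.

Lemma sqr_fd_ge1 a : 1 <= fd F a ^+ 2.
Proof. exact/exprn_ege1/fd_ge1. Qed.

Lemma mass_ge0 A : 0 <= mass F A.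
Proof. by apply: fsumr_ge0 => a _; apply: le_trans (sqr_fd_ge1 a). Qed.

Lemma mass_infinite A : infinite_set A -> mass F A = 0.
Proof.
move=> A_inf; rewrite /mass no_finite_support ?big_nil //.
rewrite setIidl // => a _ /=; apply/eqP.
by rewrite gt_eqF // (lt_le_trans _ (sqr_fd_ge1 a)).
Qed.

Lemma massD A B : finite_set B -> A `<=` B -> mass F B = mass F A + mass F (B `\` A).
Proof. by move=> B_fin AB; rewrite /mass (fsbigID A) // setDE (setIidr AB). Qed.

Lemma le_mass A B : finite_set B -> A `<=` B -> mass F A <= mass F B.
Proof. by move=> B_fin AB; rewrite (massD B_fin AB) lerDl mass_ge0. Qed.

Lemma mass_ge1 A a : finite_set A -> A a -> 1 <= mass F A.
Proof.
move=> A_fin Aa; apply: le_trans (sqr_fd_ge1 a) _.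
rewrite -(fsbig_set1 (@GRing.add Rl) a (fun b => fd F b ^+ 2)).
by apply: le_mass => // b ->.
Qed.

Definition folner_ratio X (A : {fset I}) : Rl :=
  mass F (inner_boundary F X A) / mass F [set a | a \in A].

Lemma folner_ratio_ge0 X A : 0 <= folner_ratio X A.
Proof. by rewrite divr_ge0 ?mass_ge0. Qed.

Lemma folner_ratio_le1 X A : A != fset0 -> folner_ratio X A <= 1.
Proof.
case/fset0Pn => a aA.
have A_ge1 : 1 <= mass F [set a | a \in A] by apply: (mass_ge1 _ aA).
rewrite ler_pdivrMr ?mul1r; last by apply: lt_le_trans A_ge1.
by apply: le_mass => [|b []].
Qed.

Lemma FolX_le_ratio X A : A != fset0 -> FolX F X <= folner_ratio X A.
Proof.
move=> A_neq0; apply: ge_inf; last by exists A.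
by exists 0 => _ [B [_ ->]]; apply: folner_ratio_ge0.
Qed.

Lemma FolX_ge0 X : 0 <= FolX F X.
Proof.
apply: lb_le_inf => [|_ [A [_ ->]]]; last exact: folner_ratio_ge0.
by exists (folner_ratio X [fset e]%fset), [fset e]%fset; rewrite fset1_neq0.
Qed.

Lemma FolX_le1 X : FolX F X <= 1.
Proof.
have e_neq0 := fset1_neq0 e.
exact: le_trans (FolX_le_ratio X e_neq0) (folner_ratio_le1 X e_neq0).
Qed.

Lemma Fol_le_FolX X : generating F X -> Fol F <= FolX F X.
Proof.
move=> genX; apply: ge_inf; last by exists X.
by exists 0 => _ [Y [_ ->]]; apply: FolX_ge0.
Qed.

Section Balls.
Variable X : {fset I}.
Hypothesis genX : generating F X.
Local Notation B := (Defs.ball F X).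

Lemma ell_e : ell F X e = 0%N.
Proof. by rewrite /ell eqxx. Qed.

Lemma ell_word a :
  exists w, [/\ size w = ell F X a, all (fun x => x \in X) w & in_prod F a w].
Proof.
case: genX => _ gen; rewrite /ell; case: eqP => [->|_].
  by exists [::]; rewrite /in_prod /word_prod /= eqxx.
case: pselect => [ex|nex]; last first.
  have [w [w_gt0 [wX a_in]]] := gen a.
  by case: nex; exists (size w); apply/asboolP; split => //; exists w.
by case: ex_minnP => n /asboolP [_ [w [<- [wX a_in]]]] _; exists w.
Qed.

Lemma ell_le_size a w :
  a != e -> (1 <= size w)%N -> all (fun x => x \in X) w -> in_prod F a w ->
  (ell F X a <= size w)%N.
Proof.
move=> a_neq_e w_gt0 wX a_in; rewrite /ell (negbTE a_neq_e).
have len : length_pred F X a (size w) by apply/asboolP; split => //; exists w.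
by case: pselect => [ex|[]]; [case: ex_minnP => n _; apply | exists (size w)].
Qed.

Lemma ell_mulr a b x :
  x \in X -> b \in fsupp F a x -> (ell F X b <= (ell F X a).+1)%N.
Proof.
move=> xX b_in; have [w [<- wX a_in]] := ell_word a.
have [->|b_neq_e] := eqVneq b e; first by rewrite ell_e.
rewrite -(size_rcons w x); apply: ell_le_size; rewrite ?size_rcons ?all_rcons ?xX //.
exact: in_prod_rcons a_in b_in.
Qed.

Lemma le_ball n k : (n <= k)%N -> B n `<=` B k.
Proof. by move=> nk a /= /leq_trans; apply. Qed.

Lemma ball_e n : B n e.
Proof. by rewrite /Defs.ball /= ell_e. Qed.

Lemma inner_boundary_ball n :
  finite_set (B n.+1) ->
  inner_boundary F X (fset_set (B n.+1)) `<=` B n.+1 `\` B n.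
Proof.
move=> fin a [+ [x [xX not_sub]]].
rewrite in_fset_set // inE => a_in; split => // a_in_n; apply: not_sub => b b_in.
rewrite in_fset_set // inE /Defs.ball /=.
by rewrite (leq_trans (ell_mulr xX b_in)) ?ltnS.
Qed.

Lemma FolX_le_ball_ratio n :
  finite_set (B n.+1) -> FolX F X <= 1 - mass F (B n) / mass F (B n.+1).
Proof.
move=> fin; set A := fset_set (B n.+1).
have A_neq0 : A != fset0.
  by apply/fset0Pn; exists e; rewrite in_fset_set // inE; apply: ball_e.
apply: le_trans (FolX_le_ratio X A_neq0) _.
rewrite /folner_ratio fset_setK //.
have B_gt0 : 0 < mass F (B n.+1) by apply: lt_le_trans (mass_ge1 fin (ball_e _)).
rewrite ler_pdivrMr // mulrBl mul1r divfK ?gt_eqF //.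
rewrite (massD fin (le_ball (leqnSn n))) addrC addKr.
apply: le_mass; first exact: finite_setD.
exact: inner_boundary_ball.
Qed.

Lemma omegaX_infinite_ball n : infinite_set (B n) -> omegaX F X = 0.
Proof.
move=> B_inf; apply: norm_lim_near_cst; exists (maxn n 1) => // k /=.
rewrite geq_max => /andP[nk k_gt0].
rewrite mass_infinite ?powR0 ?invr_eq0 ?pnatr_eq0 -?lt0n //.
by move=> fin; apply: B_inf; apply: sub_finite_set fin; apply: le_ball.
Qed.

Lemma omegaX_ge0 : 0 <= omegaX F X.
Proof.
have [root_cvg|root_dvg] := pselect (cvgn (fun n => mass F (B n) `^ n%:R^-1)).
  by apply: limr_ge => //; exists 0%N => // n _; apply: powR_ge0.
by rewrite /omegaX (dvgP root_dvg).
Qed.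

(* If some ball is infinite (its mass is then the junk value 0) or the roots
   diverge, [omegaX] is 0 and the bound reads [FolX <= 1 - 0^-1 = 1]. *)
Lemma FolX_le_omegaX : FolX F X <= 1 - (omegaX F X)^-1.
Proof.
have [->|/eqP omega_neq0] := eqVneq (omegaX F X) 0.
  by rewrite invr0 subr0 FolX_le1.
have fin n : finite_set (B n).
  by apply: contra_notP omega_neq0 => /omegaX_infinite_ball.
have root_cvg : cvgn (fun n => mass F (B n) `^ n%:R^-1).
  by apply: contra_notP omega_neq0 => /dvgP.
rewrite lerBrDl -lerBrDr; apply: inv_lim_root_le root_cvg.
  by move=> n; apply: mass_ge1 (fin n) (ball_e n).
move=> n; have := FolX_le_ball_ratio (fin n.+1).
have B_gt0 : 0 < mass F (B n.+1) by apply: lt_le_trans (mass_ge1 (fin _) (ball_e _)).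
by rewrite lerBrDl -lerBrDr ler_pdivrMr.
Qed.

End Balls.

Lemma omega_le_omegaX X : generating F X -> omega F <= omegaX F X.
Proof.
move=> genX; apply: ge_inf; last by exists X.
by exists 0 => _ [Y [genY ->]]; apply: omegaX_ge0.
Qed.

Lemma le_omega c :
  (exists X, generating F X) ->
  (forall X, generating F X -> c <= omegaX F X) -> c <= omega F.
Proof.
move=> [X genX] c_le; apply: lb_le_inf; first by exists (omegaX F X), X.
by move=> _ [Y [genY ->]]; apply: c_le.
Qed.

Lemma omega_eq0 X : generating F X -> omegaX F X = 0 -> omega F = 0.
Proof.
move=> genX omegaX0; apply/le_anti/andP; split.
  by rewrite -omegaX0 omega_le_omegaX.
by apply: le_omega => [|Y genY]; [exists X | apply: omegaX_ge0].
Qed.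

End FusionAlgebra.

Theorem proposition3p17 (Rl : realType) (I : choiceType)
    (F : fusion_algebra Rl I) (X : {fset I}) :
  generating F X ->
  FolX F X <= 1 - (omegaX F X)^-1 /\ Fol F <= 1 - (omega F)^-1.
Proof.
move=> genX; split; first exact: FolX_le_omegaX.
have [[Y [genY omegaY0]]|rates_neq0] :=
  pselect (exists Y, generating F Y /\ omegaX F Y = 0).
  rewrite (omega_eq0 genY omegaY0) invr0 subr0.
  exact: le_trans (Fol_le_FolX genY) (FolX_le1 F Y).
have omegaX_gt0 Y : generating F Y -> 0 < omegaX F Y.
  move=> genY; rewrite lt_neqAle eq_sym omegaX_ge0 andbT.
  by apply/eqP => omegaY0; apply: rates_neq0; exists Y.
have Fol_lt1 : Fol F < 1.
  apply: le_lt_trans (Fol_le_FolX genX) (le_lt_trans (FolX_le_omegaX genX) _).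
  by rewrite ltrBlDr ltrDl invr_gt0 omegaX_gt0.
have le_omega_F : (1 - Fol F)^-1 <= omega F.
  apply: le_omega => [|Y genY]; first by exists X.
  rewrite -le_subr_inv ?omegaX_gt0 //.
  exact: le_trans (Fol_le_FolX genY) (FolX_le_omegaX genY).
rewrite le_subr_inv //; apply: lt_le_trans le_omega_F.
by rewrite invr_gt0 subr_gt0.
Qed.
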